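(* Let $G$ be a DAG with $n$ nodes and $k,r,g,L$ positive integers. Suppose that every SPP pebbling strategy of $G$ with fast memory of size $k\cdot r$ uses at least $L$ I/O operations. Then every MPP pebbling strategy of $G$ with $k$ processors, fast memory size $r$ each, and I/O cost $g$ has cost at least $g\cdot L/k+n/k$.
   Context: Single-processor red-blue pebbling (SPP) with fast memory size $r$ on a DAG $G=(V,E)$: a state is a pair $(R,B)$ of subsets of $V$ (red and blue pebbles), starting with both empty. Rules: (R1-S) place a red pebble on a node carrying a blue pebble; (R2-S) place a blue pebble on a node carrying a red pebble; (R3-S) place a red pebble on a node all of whose in-neighbors carry red pebbles (in particular on any source); (R4-S) remove any pebble. At all times $|R|\le r$; a strategy must end in a state where every sink carries a pebble. Its I/O cost is the number of applications of (R1-S) and (R2-S). Multiprocessor red-blue pebbling (MPP). Input: a DAG $G=(V,E)$ with $n=|V|$ and positive integers $k$ (number of processors), $r$ (fast-memory size per processor), $g$ (cost of an I/O step). $\Delta_{in}$ denotes the maximum in-degree of $G$; sources/sinks are nodes of in-degree/out-degree $0$. A configuration is a tuple $(R^1,\dots,R^k,B)$ of subsets of $V$ ($R^j$ = nodes carrying a red pebble of processor $j$, $B$ = nodes carrying a blue pebble); it is valid if $|R^j|\le r$ for all $j$. The initial configuration has all sets empty; a configuration is terminal if every sink lies in $B\cup\bigcup_j R^j$. The transition rules are: (R1) for some $m\le k$, pairwise distinct processors $j_1,\dots,j_m$ and nodes $v_1,\dots,v_m$ with $v_i\in R^{j_i}$, add each $v_i$ to $B$ (cost $g$); (R2) for some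 $m\le k$, pairwise distinct processors $j_1,\dots,j_m$ and nodes $v_1,\dots,v_m\in B$, add each $v_i$ to $R^{j_i}$ (cost $g$); (R3) for some $m\le k$, pairwise distinct processors $j_1,\dots,j_m$ and nodes $v_1,\dots,v_m$ such that every in-neighbor of $v_i$ lies in $R^{j_i}$, add each $v_i$ to $R^{j_i}$ (cost $1$); (R4) remove a single red or blue pebble (cost $0$). A pebbling strategy is a sequence of valid configurations starting at the initial configuration and ending at a terminal one, each obtained from its predecessor by one rule; its cost is the sum of the costs of the rules applied. $\mathrm{OPT}$ denotes the minimum cost of a pebbling strategy. Applications of (R1),(R2) are called I/O steps and applications of (R3) compute steps. *)

From mathcomp Require Import all_boot all_order all_algebra.
Set Implicit Arguments. Unset Strict Implicit. Unset Printing Implicit Defensive.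

(* A directed graph on a finite node type V, given by an edge relation:
   [e u v] means there is an edge u -> v (u is an in-neighbour of v). *)
Section Pebbling.
Variable V : finType.
Variable e : rel V.

Definition is_dag : Prop :=
  forall (x : V) (p : seq V), path e x p -> p != [::] -> last x p != x.

Definition is_sink (v : V) : bool := [forall w, ~~ e v w].

Definition in_nbrs_in (v : V) (S : {set V}) : bool := [forall u, e u v ==> (u \in S)].

Inductive spp_move : Type :=
| SLoad of V
| SStore of V
| SCompute of V
| SRemRed of V
| SRemBlue of V.

Definition spp_apply (s : {set V} * {set V}) (m : spp_move)
  : option ({set V} * {set V}) :=
  let: (R, B) := s in
  match m with
  | SLoad v => if v \in B then Some (v |: R, B) else None
  | SStore v => if v \in R then Some (R, v |: B) else None
  | SCompute v => if in_nbrs_in v R then Some (v |: R, B) else None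
  | SRemRed v => if v \in R then Some (R :\ v, B) else None
  | SRemBlue v => if v \in B then Some (R, B :\ v) else None
  end.

Fixpoint spp_run (r : nat) (s : {set V} * {set V}) (ms : seq spp_move)
  : option ({set V} * {set V}) :=
  match ms with
  | [::] => Some s
  | m :: ms' =>
      match spp_apply s m with
      | Some s' => if #|s'.1| <= r then spp_run r s' ms' else None
      | None => None
      end
  end.

Definition spp_terminal (s : {set V} * {set V}) : bool :=
  [forall v, is_sink v ==> (v \in s.1 :|: s.2)].

Definition spp_strategy (r : nat) (ms : seq spp_move) : bool :=
  if spp_run r (set0, set0) ms is Some s then spp_terminal s else false.

Definition spp_is_io (m : spp_move) : bool :=
  match m with SLoad _ | SStore _ => true | _ => false end.

Definition spp_io (ms : seq spp_move) : nat := count spp_is_io ms.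

Variable k : nat.

(* A parallel rule application is a list of (processor, node) pairs with
   pairwise distinct processors (so m <= k automatically). *)
Inductive mpp_move : Type :=
| MStore of seq ('I_k * V)
| MLoad of seq ('I_k * V)
| MCompute of seq ('I_k * V)
| MRemRed of 'I_k & V
| MRemBlue of V.

Definition mpp_state : Type := ({ffun 'I_k -> {set V}} * {set V})%type.

Definition add_reds (R : {ffun 'I_k -> {set V}}) (ps : seq ('I_k * V))
  : {ffun 'I_k -> {set V}} :=
  [ffun j => R j :|: [set x in [seq p.2 | p <- ps & p.1 == j]]].

Definition mpp_apply (s : mpp_state) (m : mpp_move) : option mpp_state :=
  let: (R, B) := s in
  match m with
  | MStore ps =>
      if uniq [seq p.1 | p <- ps] && all (fun p => p.2 \in R p.1) ps
      then Some (R, B :|: [set x in [seq p.2 | p <- ps]]) else None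
  | MLoad ps =>
      if uniq [seq p.1 | p <- ps] && all (fun p => p.2 \in B) ps
      then Some (add_reds R ps, B) else None
  | MCompute ps =>
      if uniq [seq p.1 | p <- ps] && all (fun p => in_nbrs_in p.2 (R p.1)) ps
      then Some (add_reds R ps, B) else None
  | MRemRed j v =>
      if v \in R j then Some ([ffun i => if i == j then R i :\ v else R i], B)
      else None
  | MRemBlue v => if v \in B then Some (R, B :\ v) else None
  end.

Definition mpp_valid (r : nat) (s : mpp_state) : bool := [forall j, #|s.1 j| <= r].

Fixpoint mpp_run (r : nat) (s : mpp_state) (ms : seq mpp_move) : option mpp_state :=
  match ms with
  | [::] => Some s
  | m :: ms' =>
      match mpp_apply s m with
      | Some s' => if mpp_valid r s' then mpp_run r s' ms' else None
      | None => None
      end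
  end.

Definition mpp_init : mpp_state := ([ffun => set0], set0).

Definition mpp_terminal (s : mpp_state) : bool :=
  [forall v, is_sink v ==> ((v \in s.2) || [exists j, v \in s.1 j])].

Definition mpp_strategy (r : nat) (ms : seq mpp_move) : bool :=
  if mpp_run r mpp_init ms is Some s then mpp_terminal s else false.

Definition mpp_move_cost (g : nat) (m : mpp_move) : nat :=
  match m with
  | MStore _ | MLoad _ => g
  | MCompute _ => 1
  | _ => 0
  end.

Definition mpp_cost (g : nat) (ms : seq mpp_move) : nat :=
  \sum_(m <- ms) mpp_move_cost g m.

End Pebbling.

(* An MPP run is simulated by an SPP run with fast memory k r whose red set is the
   union of the processors' red sets; a parallel I/O step becomes at most k sequential
   ones, so L <= k * #I/O-steps.  Independently, the nodes computed during the run form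
   a set closed under in-neighbours that contains every pebbled node, hence every sink,
   hence (the graph being a DAG) every node; a parallel compute step computes at most
   k nodes, so n <= k * #compute-steps.  Since the cost is g * #I/O-steps +
   #compute-steps, multiplying by k gives the bound. *)

From mathcomp Require Import all_boot all_order all_algebra.
From mathcomp Require Import zify.
Import GRing.Theory Num.Theory.
Set Implicit Arguments. Unset Strict Implicit.

Definition in_closed (V : finType) (e : rel V) (C : {set V}) : Prop :=
  forall u v, e u v -> v \in C -> u \in C.

Section Dag.
Variables (V : finType) (e : rel V).
Hypothesis dag : is_dag e.

Lemma dag_successor_closed_set0 (D : {set V}) :
  (forall x, x \in D -> exists2 y, e x y & y \in D) -> D = set0.
Proof.
move=> succD; apply/setP => x0; rewrite inE; apply/negP => x0D.
pose f x := odflt x [pick y | e x y && (y \in D)].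
have f_succ x : x \in D -> e x (f x) && (f x \in D).
  move=> xD; rewrite /f; case: pickP => [y -> //|none].
  by have [y exy yD] := succD x xD; have := none y; rewrite exy yD.
have iter_in n : iter n f x0 \in D.
  by elim: n => [//|n IHn] /=; case/andP: (f_succ _ IHn).
have path_f n x : x \in D -> path e x (traject f (f x) n).
  elim: n x => [//|n IHn] x xD /=.
  by case/andP: (f_succ _ xD) => -> fxD; exact: IHn.
(* Following a successor inside D from x0 must revisit a node, closing a cycle. *)
have /injectivePn [i [j neq_ij eq_ij]] :
    ~~ injectiveb (fun i : 'I_#|V|.+1 => iter i f x0).
  by apply/injectiveP => /leq_card; rewrite card_ord ltnn.
wlog lt_ij : i j neq_ij eq_ij / i < j.
  move=> hwlog; case: (ltngtP i j) => [lt_ij|lt_ji|/val_inj eq_ij'].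
  - exact: hwlog lt_ij.
  - by apply: (hwlog j i); rewrite // eq_sym.
  - by rewrite eq_ij' eqxx in neq_ij.
set y := iter i f x0.
have cyc : iter (j - i) f y = y by rewrite /y -iterD subnK ?eq_ij // ltnW.
have := dag (path_f (j - i) y (iter_in i)).
rewrite last_traject cyc eqxx.
by rewrite -subn_gt0 in lt_ij; case: (j - i) lt_ij => [|d] //= _ /(_ isT).
Qed.

Lemma dag_in_closed_setT (C : {set V}) :
  (forall v, is_sink e v -> v \in C) -> in_closed e C -> C = setT.
Proof.
move=> sinkC closedC; rewrite -[C]setCK (dag_successor_closed_set0 (D := ~: C)) ?setC0 //.
move=> x; rewrite inE => xC.
have /forallPn [y] : ~~ is_sink e x by apply: contra xC; exact: sinkC.
rewrite negbK => exy; exists y; rewrite // inE.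
by apply: contra xC; exact: closedC.
Qed.
End Dag.

Lemma card_bigcup_le (T I : finType) (P : pred I) (F : I -> {set T}) :
  #|\bigcup_(i | P i) F i| <= \sum_(i | P i) #|F i|.
Proof.
apply: (big_ind2 (fun (A : {set T}) n => #|A| <= n)) => [|A m B n leA leB|//].
  by rewrite leqn0 cards_eq0.
by rewrite (leq_trans (leq_card_setU A B)) ?leq_add.
Qed.

Lemma in_nbrs_in_subset (V : finType) (e : rel V) v (A B : {set V}) :
  A \subset B -> in_nbrs_in e v A -> in_nbrs_in e v B.
Proof.
move=> /subsetP AB /forallP inA; apply/forallP => u; apply/implyP => euv.
by apply: AB; have := inA u; rewrite euv.
Qed.

Section SppRuns.
Variables (V : finType) (e : rel V) (r : nat).

Lemma spp_run_cat s ms1 ms2 :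
  spp_run e r s (ms1 ++ ms2) = obind (fun s' => spp_run e r s' ms2) (spp_run e r s ms1).
Proof.
elim: ms1 s => [|m ms1 IH] s //=.
by case: (spp_apply e s m) => [s'|] //; case: ifP.
Qed.

Lemma spp_run_cons s m ms :
  spp_run e r s (m :: ms) =
  if spp_apply e s m is Some s' then (if #|s'.1| <= r then spp_run e r s' ms else None)
  else None.
Proof. by []. Qed.

Lemma spp_run_adds (c : V -> spp_move V) (xs : seq V) (R B : {set V}) :
  (forall x (R' : {set V}), x \in xs -> R \subset R' ->
     spp_apply e (R', B) (c x) = Some (x |: R', B)) ->
  #|R :|: [set x in xs]| <= r ->
  spp_run e r (R, B) (map c xs) = Some (R :|: [set x in xs], B).
Proof.
elim: xs R => [|x xs IH] R addc card_r.
  by congr (Some (_, _)); apply/setP => y; rewrite !inE orbF.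
have eqR : (x |: R) :|: [set y in xs] = R :|: [set y in x :: xs].
  by apply/setP => y; rewrite !inE orbCA orbA.
rewrite map_cons spp_run_cons addc ?mem_head ?subxx //=.
have -> : #|x |: R| <= r.
  apply: leq_trans card_r; apply: subset_leq_card; rewrite -eqR.
  exact: subsetUl.
rewrite IH ?eqR // => y R' yxs sR; apply: addc; first by rewrite inE yxs orbT.
by apply: subset_trans sR; exact: subsetUr.
Qed.

Lemma spp_run_stores (xs : seq V) (R B : {set V}) :
  {subset xs <= R} -> #|R| <= r ->
  spp_run e r (R, B) (map (@SStore V) xs) = Some (R, B :|: [set x in xs]).
Proof.
elim: xs B => [|x xs IH] B xsR card_r /=.
  by congr (Some (_, _)); apply/setP => y; rewrite !inE orbF.
rewrite xsR ?mem_head //= card_r IH //; last by move=> y yxs; rewrite xsR // inE yxs orbT.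
by congr (Some (_, _)); apply/setP => y; rewrite !inE orbCA orbA.
Qed.
End SppRuns.

Section Simulation.
Variables (V : finType) (e : rel V) (k : nat).

Definition red_union (R : {ffun 'I_k -> {set V}}) : {set V} := \bigcup_j R j.

Definition spp_view (s : mpp_state V k) : {set V} * {set V} := (red_union s.1, s.2).

Lemma card_red_union r (R : {ffun 'I_k -> {set V}}) :
  (forall j, #|R j| <= r) -> #|red_union R| <= k * r.
Proof.
move=> card_r; apply: (leq_trans (card_bigcup_le _ _)).
have -> : k * r = \sum_(j < k) r by rewrite sum_nat_const card_ord.
by apply: leq_sum => j _.
Qed.

Lemma red_union_add_reds R (ps : seq ('I_k * V)) :
  red_union (add_reds R ps) = red_union R :|: [set x in [seq p.2 | p <- ps]].
Proof.
apply/setP => x; apply/bigcupP/setUP => [[j _]|].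
  rewrite ffunE => /setUP [xR|]; first by left; apply/bigcupP; exists j.
  by rewrite inE => /mapP [p]; rewrite mem_filter => /andP [_ pps] ->; right; rewrite inE map_f.
case=> [/bigcupP [j _ xR]|]; first by exists j; rewrite // ffunE inE xR.
rewrite inE => /mapP [p pps ->].
by exists p.1; rewrite // ffunE !inE; apply/orP; right; apply: map_f; rewrite mem_filter eqxx.
Qed.

Lemma size_uniq_procs (ps : seq ('I_k * V)) : uniq [seq p.1 | p <- ps] -> size ps <= k.
Proof.
by move/card_uniqP; rewrite size_map => <-; rewrite -[leqRHS]card_ord max_card.
Qed.

Definition remove_red (R : {ffun 'I_k -> {set V}}) j v : {ffun 'I_k -> {set V}} :=
  [ffun i => if i == j then R i :\ v else R i].

Lemma red_union_remove_shared (R : {ffun 'I_k -> {set V}}) (j i : 'I_k) (v : V) :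
  i != j -> v \in R i -> red_union (remove_red R j v) = red_union R.
Proof.
move=> neq_ij vRi; apply/setP => x; apply/bigcupP/bigcupP => [[l _]|[l _ xRl]].
  by rewrite ffunE; case: ifP => _; [case/setD1P|]; exists l.
have [-> | xv] := eqVneq x v; first by exists i; rewrite // ffunE (negbTE neq_ij).
by exists l; rewrite // ffunE; case: ifP; rewrite // in_setD1 xv.
Qed.

Lemma red_union_remove_last (R : {ffun 'I_k -> {set V}}) (j : 'I_k) (v : V) :
  ~~ [exists i, (i != j) && (v \in R i)] ->
  red_union (remove_red R j v) = red_union R :\ v.
Proof.
move=> /existsPn only_j; apply/setP => x; rewrite in_setD1.
apply/bigcupP/andP => [[l _]|[xv /bigcupP [l _ xRl]]].
  rewrite ffunE; case: ifP => [_ /setD1P [xv xRl]|lj xRl].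
    by split=> //; apply/bigcupP; exists l.
  split; last by apply/bigcupP; exists l.
  by apply: contraTneq isT => xv; have := only_j l; rewrite lj -xv xRl.
by exists l; rewrite // ffunE; case: ifP; rewrite // in_setD1 xv.
Qed.

(* A removal of processor j's red pebble from v is simulated only when no other
   processor holds v; otherwise the union of the red sets does not change. *)
Definition spp_of_mpp_move (s : mpp_state V k) (m : mpp_move V k) : seq (spp_move V) :=
  match m with
  | MStore ps => map (@SStore V) [seq p.2 | p <- ps]
  | MLoad ps => map (@SLoad V) [seq p.2 | p <- ps]
  | MCompute ps => map (@SCompute V) [seq p.2 | p <- ps]
  | MRemRed j v => if [exists i, (i != j) && (v \in s.1 i)] then [::] else [:: SRemRed v]
  | MRemBlue v => [:: SRemBlue v]
  end.

Fixpoint spp_of_mpp_run (s : mpp_state V k) (ms : seq (mpp_move V k)) : seq (spp_move V) :=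
  if ms is m :: ms' then
    if mpp_apply e s m is Some s' then spp_of_mpp_move s m ++ spp_of_mpp_run s' ms' else [::]
  else [::].

Definition mpp_is_io (m : mpp_move V k) : bool :=
  if m is (MStore _ | MLoad _) then true else false.

Definition mpp_is_compute (m : mpp_move V k) : bool :=
  if m is MCompute _ then true else false.

Lemma spp_io_of_mpp_move s m s' :
  mpp_apply e s m = Some s' -> spp_io (spp_of_mpp_move s m) <= k * mpp_is_io m.
Proof.
case: s => R B; case: m => [ps|ps|ps|j v|v] /=.
1,2: case: ifP => // /andP [/size_uniq_procs le_k _] _.
1,2: by rewrite /spp_io count_map muln1 (leq_trans (count_size _ _)) ?size_map.
- by rewrite /spp_io count_map muln0 (@eq_count _ _ pred0) ?count_pred0.
- by move=> _; case: ifP.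
- by [].
Qed.

Lemma spp_run_of_mpp_move r s m s' :
  mpp_apply e s m = Some s' -> mpp_valid r s' ->
  spp_run e (k * r) (spp_view s) (spp_of_mpp_move s m) = Some (spp_view s').
Proof.
case: s => R B; rewrite /spp_view; case: m => [ps|ps|ps|j v|v] /=.
- case: ifP => // /andP [_ /allP inR] [<-] /forallP /card_red_union card_r /=.
  apply: spp_run_stores card_r => _ /mapP [p pps ->].
  by apply/bigcupP; exists p.1; rewrite // inR.
- case: ifP => // /andP [_ /allP inB] [<-] /forallP /card_red_union card_r /=.
  rewrite spp_run_adds -?red_union_add_reds // => _ R' /mapP [p pps ->] _ /=.
  by rewrite inB.
- case: ifP => // /andP [_ /allP nbrs] [<-] /forallP /card_red_union card_r /=.
  rewrite spp_run_adds -?red_union_add_reds // => _ R' /mapP [p pps ->] sub_R /=.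
  rewrite (in_nbrs_in_subset _ (nbrs p pps)) //.
  by apply: subset_trans sub_R; exact: bigcup_sup.
- case: ifP => // vRj [<-] /forallP /card_red_union card_r /=.
  case: ifP => [/existsP [i /andP [neq_ij vRi]]|/negbT only_j] /=.
    by rewrite (red_union_remove_shared neq_ij vRi).
  have vR : v \in red_union R by apply/bigcupP; exists j.
  by rewrite vR -(red_union_remove_last only_j) card_r.
- by case: ifP => // vB [<-] /forallP /card_red_union card_r /=; rewrite card_r.
Qed.

Lemma spp_run_of_mpp_run r s ms t :
  mpp_run e r s ms = Some t ->
  spp_run e (k * r) (spp_view s) (spp_of_mpp_run s ms) = Some (spp_view t) /\
  spp_io (spp_of_mpp_run s ms) <= k * count mpp_is_io ms.
Proof.
elim: ms s => [|m ms IH] s /=; first by case=> <-.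
case step: (mpp_apply e s m) => [s'|] //; case: ifP => // valid /IH [run io].
rewrite spp_run_cat (spp_run_of_mpp_move step valid) /= run.
by rewrite /spp_io count_cat mulnDr leq_add ?(spp_io_of_mpp_move step).
Qed.

Lemma red_union_init : red_union (mpp_init V k).1 = set0.
Proof. by apply/setP => x; rewrite inE; apply/bigcupP => -[j _]; rewrite ffunE inE. Qed.

Lemma mpp_terminal_sink t v :
  mpp_terminal e t -> is_sink e v -> v \in red_union t.1 :|: t.2.
Proof.
move=> /forallP/(_ v)/implyP term /term /orP [vB|/existsP [j vRj]].
  by rewrite inE vB orbT.
by rewrite inE; apply/orP; left; apply/bigcupP; exists j.
Qed.

Lemma spp_terminal_view t : mpp_terminal e t -> spp_terminal e (spp_view t).
Proof. by move=> term; apply/forallP => v; apply/implyP; exact: mpp_terminal_sink. Qed.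

Lemma spp_strategy_of_mpp r ms :
  mpp_strategy e r ms ->
  spp_strategy e (k * r) (spp_of_mpp_run (mpp_init V k) ms) /\
  spp_io (spp_of_mpp_run (mpp_init V k) ms) <= k * count mpp_is_io ms.
Proof.
rewrite /mpp_strategy /spp_strategy; case run: mpp_run => [t|] // term.
have [+ io] := spp_run_of_mpp_run run.
by rewrite /spp_view red_union_init /= => ->; split=> //; exact: spp_terminal_view.
Qed.

Definition computed_nodes (m : mpp_move V k) : seq V :=
  if m is MCompute ps then [seq p.2 | p <- ps] else [::].

Definition pebbled_within (C : {set V}) (s : mpp_state V k) : bool :=
  (red_union s.1 \subset C) && (s.2 \subset C).

Lemma size_computed_nodes s m s' :
  mpp_apply e s m = Some s' -> size (computed_nodes m) <= k * mpp_is_compute m.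
Proof.
case: s => R B; case: m => [ps|ps|ps|j v|v] //=.
by case: ifP => // /andP [/size_uniq_procs le_k _] _; rewrite size_map muln1.
Qed.

Lemma in_closed_computed C s m s' :
  mpp_apply e s m = Some s' -> pebbled_within C s -> in_closed e C ->
  in_closed e (C :|: [set:: computed_nodes m]).
Proof.
case: s => R B; case: m => [ps|ps|ps|j v|v] /=; rewrite ?set_nil ?setU0 //.
case: ifP => // /andP [_ /allP nbrs] _ /andP [/subsetP RC _] closedC u v euv.
rewrite !inE => /orP [/(closedC _ _ euv) -> //|/mapP [p pps vp]].
have /forallP/(_ u) := nbrs p pps; rewrite -vp euv /= => uR.
by rewrite RC ?orbT //; apply/bigcupP; exists p.1.
Qed.

Lemma pebbled_within_computed C s m s' :
  mpp_apply e s m = Some s' -> pebbled_within C s ->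
  pebbled_within (C :|: [set:: computed_nodes m]) s'.
Proof.
case: s => R B; rewrite /pebbled_within.
case: m => [ps|ps|ps|j v|v] /=; rewrite ?set_nil ?setU0 => + /andP [/subsetP RC /subsetP BC].
- case: ifP => // /andP [_ /allP inR] [<-] /=; apply/andP; split; first exact/subsetP.
  apply/subsetP => x; rewrite !inE => /orP [/BC //|/mapP [p pps ->]].
  by apply: RC; apply/bigcupP; exists p.1; rewrite // inR.
- case: ifP => // /andP [_ /allP inB] [<-] /=; rewrite red_union_add_reds.
  apply/andP; split; last exact/subsetP.
  apply/subsetP => x /setUP [/RC //|]; rewrite inE => /mapP [p pps ->].
  exact/BC/inB.
- case: ifP => // _ [<-] /=; rewrite red_union_add_reds; apply/andP; split.
    apply/subsetP => x /setUP [/RC xC|]; first by rewrite inE xC.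
    by rewrite !inE => ->; rewrite orbT.
  by apply/subsetP => x /BC xC; rewrite inE xC.
- case: ifP => // _ [<-] /=; apply/andP; split; last exact/subsetP.
  apply/subsetP => x /bigcupP [l _]; rewrite ffunE => xRl; apply: RC.
  by apply/bigcupP; exists l; case: ifP xRl => // _ /setD1P [].
- case: ifP => // _ [<-] /=; apply/andP; split; first exact/subsetP.
  by apply/subsetP => x /setD1P [_ /BC].
Qed.

Lemma computed_nodes_run r s ms t C :
  mpp_run e r s ms = Some t -> in_closed e C -> pebbled_within C s ->
  let C' := C :|: [set:: flatten (map computed_nodes ms)] in
  in_closed e C' /\ pebbled_within C' t.
Proof.
elim: ms s C => [|m ms IH] s C /=; first by case=> <-; rewrite set_nil setU0.
case step: (mpp_apply e s m) => [s'|] //; case: ifP => // _ run closedC within.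
have := IH _ _ run (in_closed_computed step within closedC).
have -> : (C :|: [set:: computed_nodes m]) :|: [set:: flatten (map computed_nodes ms)] =
          C :|: [set:: computed_nodes m ++ flatten (map computed_nodes ms)].
  by apply/setP => x; rewrite !inE mem_cat orbA.
by apply; exact: pebbled_within_computed step within.
Qed.

Lemma size_computed_run r s ms t :
  mpp_run e r s ms = Some t ->
  size (flatten (map computed_nodes ms)) <= k * count mpp_is_compute ms.
Proof.
elim: ms s => [|m ms IH] s //=.
case step: (mpp_apply e s m) => [s'|] //; case: ifP => // _ /IH.
by rewrite size_cat mulnDr; apply: leq_add; exact: size_computed_nodes step.
Qed.

Lemma mpp_strategy_compute_count r ms :
  is_dag e -> mpp_strategy e r ms -> #|V| <= k * count mpp_is_compute ms.
Proof.
rewrite /mpp_strategy => dag; case run: mpp_run => [t|] // term.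
have closed0 : in_closed e set0 by move=> u v _; rewrite inE.
have within0 : pebbled_within set0 (mpp_init V k).
  by rewrite /pebbled_within red_union_init /= !sub0set.
have [closedC /andP [/subsetP RC /subsetP BC]] := computed_nodes_run run closed0 within0.
set C := _ :|: _ in closedC RC BC.
have C_full : C = setT.
  apply: (dag_in_closed_setT dag) closedC => v /(mpp_terminal_sink term).
  by case/setUP => [/RC|/BC].
apply: leq_trans (size_computed_run run).
by rewrite -cardsT -C_full /C set0U cardsE card_size.
Qed.

Lemma mpp_cost_count g (ms : seq (mpp_move V k)) :
  mpp_cost g ms = g * count mpp_is_io ms + count mpp_is_compute ms.
Proof.
elim: ms => [|m ms IH]; first by rewrite /mpp_cost big_nil muln0.
by rewrite /mpp_cost big_cons -/(mpp_cost g ms) IH; case: m => * /=; lia.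
Qed.
End Simulation.

Theorem corollary6 (V : finType) (e : rel V) (k r g L : nat) :
  is_dag e -> (0 < k)%N -> (0 < r)%N -> (0 < g)%N -> (0 < L)%N ->
  (forall ms : seq (spp_move V), spp_strategy e (k * r) ms -> (L <= spp_io ms)%N) ->
  forall ms : seq (mpp_move V k), mpp_strategy e r ms ->
  ((g * L)%:R / k%:R + #|V|%:R / k%:R <= (mpp_cost g ms)%:R :> rat)%R.
Proof.
move=> dag k_gt0 _ _ _ spp_bound ms strat.
have [spp_strat spp_io_le] := spp_strategy_of_mpp strat.
have io_bound := leq_trans (spp_bound _ spp_strat) spp_io_le.
have compute_bound := mpp_strategy_compute_count dag strat.
have : g * L + #|V| <= k * mpp_cost g ms.
  by rewrite mpp_cost_count mulnDr mulnCA leq_add // leq_mul2l io_bound orbT.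
by rewrite -mulrDl ler_pdivrMr ?ltr0n // -!natrD -natrM ler_nat [_ * k]mulnC.
Qed.
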